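(* Assume $\mathcal T$ is contravariantly finite in $\mathcal A$ and let $f\in\mathcal A(X,Y)$. The following are equivalent: (1) $\overline f$ is a strong monomorphism in the left triangulated category $\underline{\mathcal A}$; (2) for every (equivalently, for some) $\mathcal T$-precover $p_Y:T_Y\to Y$, the projection $g:T\to X$ from the pullback $T$ of $f$ and $p_Y$ is a $\mathcal T$-precover of $X$; (3) for every (equivalently, for some) $\mathcal T$-precover $p_Y:T_Y\to Y$, the pullback object $T$ of $f$ and $p_Y$ belongs to $\mathcal T$.
   Context: $\mathcal A$ is an abelian category and $\mathcal T$ is a full additive subcategory of $\mathcal A$ closed under finite direct sums and direct summands. The stable category $\underline{\mathcal A}=\mathcal A/\langle\mathcal T\rangle$ has the same objects as $\mathcal A$ and morphisms modulo those factoring through an object of $\mathcal T$; $\overline f$ is the class of $f$. When $\mathcal T$ is contravariantly finite, $\underline{\mathcal A}$ carries the left triangulated structure: $\Omega Y=\ker(p_Y)$ for a $\mathcal T$-precover $p_Y:T_Y\to Y$; for $f:X\to Y$ one forms the pullback $Z$ of $f$ and $p_Y$ with projection $g:Z\to X$ and induced morphism $\Omega Y\to Z$; left triangles are the diagrams in $\underline{\mathcal A}$ isomorphic to $\Omega Y\to Z\xrightarrow{\overline g}X\xrightarrow{\overline f}Y$. A morphism $\overline f:X\to Y$ is a strong monomorphism if there is a left triangle $\Omega Y\to 0\to X\xrightarrow{\overline f}Y$. *)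

Set Implicit Arguments.

Record PreCat := {
  Obj : Type;
  Hom : Obj -> Obj -> Type;
  idm : forall A, Hom A A;
  comp : forall A B D, Hom B D -> Hom A B -> Hom A D;
  zerom : forall A B, Hom A B;
  addm : forall A B, Hom A B -> Hom A B -> Hom A B;
  oppm : forall A B, Hom A B -> Hom A B }.

Arguments Hom {_} _ _.
Arguments idm {_} _.
Arguments comp {_ A B D} _ _.
Arguments zerom {_ A B}.
Arguments addm {_ A B} _ _.
Arguments oppm {_ A B} _.

Notation "g ∘ f" := (comp g f) (at level 40, left associativity).

Section Defs.
Variable C : PreCat.
Implicit Types (A B D E K P Q Z W X Y O TY TD : Obj C).

Definition is_preadditive : Prop :=
  (forall A B D E : Obj C, forall (h : Hom D E) (g : Hom B D) (f : Hom A B), h ∘ (g ∘ f) = (h ∘ g) ∘ f) /\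
  (forall A B : Obj C, forall (f : Hom A B), idm B ∘ f = f) /\
  (forall A B : Obj C, forall (f : Hom A B), f ∘ idm A = f) /\
  (forall A B : Obj C, forall (f g h : Hom A B), addm f (addm g h) = addm (addm f g) h) /\
  (forall A B : Obj C, forall (f g : Hom A B), addm f g = addm g f) /\
  (forall A B : Obj C, forall (f : Hom A B), addm f zerom = f) /\
  (forall A B : Obj C, forall (f : Hom A B), addm f (oppm f) = zerom) /\
  (forall A B D : Obj C, forall (h : Hom B D) (f g : Hom A B), h ∘ (addm f g) = addm (h ∘ f) (h ∘ g)) /\
  (forall A B D : Obj C, forall (f g : Hom B D) (h : Hom A B), (addm f g) ∘ h = addm (f ∘ h) (g ∘ h)).

Definition is_zero_obj (O : Obj C) : Prop :=
  (forall A (u v : Hom O A), u = v) /\ (forall A (u v : Hom A O), u = v).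

Definition is_biproduct (A B P : Obj C) (i1 : Hom A P) (i2 : Hom B P)
  (p1 : Hom P A) (p2 : Hom P B) : Prop :=
  p1 ∘ i1 = idm A /\ p2 ∘ i2 = idm B /\ p1 ∘ i2 = zerom /\ p2 ∘ i1 = zerom /\
  addm (i1 ∘ p1) (i2 ∘ p2) = idm P.

Definition is_mono {A B : Obj C} (m : Hom A B) : Prop :=
  forall Z (x y : Hom Z A), m ∘ x = m ∘ y -> x = y.

Definition is_epi {A B : Obj C} (e : Hom A B) : Prop :=
  forall Z (x y : Hom B Z), x ∘ e = y ∘ e -> x = y.

Definition is_kernel {A B K : Obj C} (f : Hom A B) (k : Hom K A) : Prop :=
  f ∘ k = zerom /\
  forall Z (x : Hom Z A), f ∘ x = zerom ->
    exists y : Hom Z K, k ∘ y = x /\ forall y' : Hom Z K, k ∘ y' = x -> y' = y.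

Definition is_cokernel {A B Q : Obj C} (f : Hom A B) (c : Hom B Q) : Prop :=
  c ∘ f = zerom /\
  forall Z (x : Hom B Z), x ∘ f = zerom ->
    exists y : Hom Q Z, y ∘ c = x /\ forall y' : Hom Q Z, y' ∘ c = x -> y' = y.

Definition is_pullback {X Y TT P : Obj C} (f : Hom X Y) (p : Hom TT Y)
  (g : Hom P X) (q : Hom P TT) : Prop :=
  f ∘ g = p ∘ q /\
  forall Z (a : Hom Z X) (b : Hom Z TT), f ∘ a = p ∘ b ->
    exists c : Hom Z P, (g ∘ c = a /\ q ∘ c = b) /\
      forall c' : Hom Z P, g ∘ c' = a -> q ∘ c' = b -> c' = c.

Record is_abelian : Prop := {
  ab_preadd : is_preadditive;
  ab_zero : exists O, is_zero_obj O;
  ab_biprod : forall A B, exists P i1 i2 p1 p2, @is_biproduct A B P i1 i2 p1 p2;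
  ab_ker : forall A B (f : Hom A B), exists K (k : Hom K A), is_kernel f k;
  ab_coker : forall A B (f : Hom A B), exists Q (c : Hom B Q), is_cokernel f c;
  ab_mono_normal : forall A B (m : Hom A B), is_mono m ->
      exists D (g : Hom B D), is_kernel g m;
  ab_epi_normal : forall A B (e : Hom A B), is_epi e ->
      exists D (g : Hom D A), is_cokernel g e }.

(* Full additive subcategory (given by its objects) closed under finite
   direct sums and direct summands. *)
Record is_add_subcat (T : Obj C -> Prop) : Prop := {
  sub_zero : exists O, is_zero_obj O /\ T O;
  sub_sum : forall A B P i1 i2 p1 p2, @is_biproduct A B P i1 i2 p1 p2 ->
      T A -> T B -> T P;
  sub_summand : forall A B P i1 i2 p1 p2, @is_biproduct A B P i1 i2 p1 p2 ->
      T P -> T A }.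

Variable T : Obj C -> Prop.

Definition factors_T {A B : Obj C} (h : Hom A B) : Prop :=
  exists D (a : Hom A D) (b : Hom D B), T D /\ h = b ∘ a.

(* equality in the stable category A / <T> *)
Definition steq {A B : Obj C} (h h' : Hom A B) : Prop :=
  factors_T (addm h (oppm h')).

Definition stiso {A B : Obj C} (a : Hom A B) : Prop :=
  exists b : Hom B A, steq (b ∘ a) (idm A) /\ steq (a ∘ b) (idm B).

Definition is_precover {TY Y : Obj C} (p : Hom TY Y) : Prop :=
  T TY /\ forall Z (t : Hom Z Y), T Z -> exists t' : Hom Z TY, p ∘ t' = t.

Definition contravariantly_finite : Prop :=
  forall Y, exists TY (p : Hom TY Y), is_precover p.

(* om : W -> K' represents Omega(ga), where W = ker q, K' = ker p'. *)
Definition omega_lift {TD D W TY' Y' K' : Obj C} (q : Hom TD D) (kq : Hom W TD)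
  (p' : Hom TY' Y') (k' : Hom K' TY') (ga : Hom D Y') (om : Hom W K') : Prop :=
  exists t : Hom TD TY', p' ∘ t = ga ∘ q /\ k' ∘ om = t ∘ kq.

(* A diagram  W --h--> B --u--> D' --v--> D  in the stable category is a left
   triangle: W = Omega D (kernel of a T-precover q of D), and the diagram is
   isomorphic (as a left triangle, first component Omega of the last one) to a
   standard triangle  Omega Y --j--> P --g--> X --f--> Y  built from some f,
   a T-precover p of Y with kernel k, the pullback (P,g,r) of f and p, and the
   induced morphism j. *)
Definition is_left_triangle {W B D' D : Obj C} (h : Hom W B) (u : Hom B D')
  (v : Hom D' D) : Prop :=
  exists TD (q : Hom TD D) (kq : Hom W TD),
    is_precover q /\ is_kernel q kq /\
  exists K P X Y (j : Hom K P) (g : Hom P X) (f : Hom X Y)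
         TY (p : Hom TY Y) (k : Hom K TY) (r : Hom P TY),
    is_precover p /\ is_kernel p k /\ is_pullback f p g r /\
    g ∘ j = zerom /\ r ∘ j = k /\
  exists (om : Hom W K) (be : Hom B P) (al : Hom D' X) (ga : Hom D Y),
    stiso om /\ stiso be /\ stiso al /\ stiso ga /\
    omega_lift q kq p k ga om /\
    steq (be ∘ h) (j ∘ om) /\ steq (al ∘ u) (g ∘ be) /\ steq (ga ∘ v) (f ∘ al).

(* f-bar is a strong monomorphism: there is a left triangle
   Omega Y -> 0 -> X -> Y (with f-bar as last morphism). *)
Definition strong_mono {X Y : Obj C} (f : Hom X Y) : Prop :=
  exists (W O : Obj C), is_zero_obj O /\
    is_left_triangle (zerom : Hom W O) (zerom : Hom O X) f.

End Defs.

Arguments is_mono {C A B} m.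
Arguments is_epi {C A B} e.
Arguments is_kernel {C A B K} f k.
Arguments is_cokernel {C A B Q} f c.
Arguments is_pullback {C X Y TT P} f p g q.
Arguments is_add_subcat {C} T.
Arguments factors_T {C} T {A B} h.
Arguments steq {C} T {A B} h h'.
Arguments stiso {C} T {A B} a.
Arguments is_precover {C} T {TY Y} p.
Arguments contravariantly_finite {C} T.
Arguments omega_lift {C TD D W TY' Y' K'} q kq p' k' ga om.
Arguments is_left_triangle {C} T {W B D' D} h u v.
Arguments strong_mono {C} T {X Y} f.

From Stdlib Require Import Setoid.

(* (3) => (1): when the pullback [P] lies in [T] it is zero in the stable category, so the
   standard triangle [Omega Y -> P -> X -> Y] is isomorphic to [Omega Y -> 0 -> X -> Y].
   (1) => (3): such a left triangle is isomorphic to the standard triangle of some [f'] whose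
   pullback [P'] lies in [T].  For any precover, [P] lies in [T] as soon as both the projection
   [g] and the map [j : Omega Y -> P] vanish stably.  For [g]: [P' ∈ T] makes [f'] a stable
   monomorphism, and this transports to [f] along the stable isomorphism.  For [j]: comparing
   pullbacks over [f] and [f'] factors [j] through [P'] up to an endomorphism of [Omega Y] that
   is stably the identity.  (2) <=> (3) because [g] is a [T]-precover exactly when [P ∈ T]. *)

Section Preadditive.
Context {C : PreCat} (HP : is_preadditive C).
Implicit Types A B D E K X Y Z : Obj C.

Lemma compA {A B D E} (h : Hom D E) (g : Hom B D) (f : Hom A B) :
  h ∘ (g ∘ f) = (h ∘ g) ∘ f.
Proof. destruct HP as [H _]; apply H. Qed.
Lemma comp1m {A B} (f : Hom A B) : idm B ∘ f = f.
Proof. destruct HP as [_ [H _]]; apply H. Qed.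
Lemma compm1 {A B} (f : Hom A B) : f ∘ idm A = f.
Proof. destruct HP as [_ [_ [H _]]]; apply H. Qed.
Lemma addmA {A B} (f g h : Hom A B) : addm f (addm g h) = addm (addm f g) h.
Proof. destruct HP as [_ [_ [_ [H _]]]]; apply H. Qed.
Lemma addmC {A B} (f g : Hom A B) : addm f g = addm g f.
Proof. destruct HP as [_ [_ [_ [_ [H _]]]]]; apply H. Qed.
Lemma addm0 {A B} (f : Hom A B) : addm f zerom = f.
Proof. destruct HP as [_ [_ [_ [_ [_ [H _]]]]]]; apply H. Qed.
Lemma addmN {A B} (f : Hom A B) : addm f (oppm f) = zerom.
Proof. destruct HP as [_ [_ [_ [_ [_ [_ [H _]]]]]]]; apply H. Qed.
Lemma compDr {A B D} (h : Hom B D) (f g : Hom A B) :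
  h ∘ addm f g = addm (h ∘ f) (h ∘ g).
Proof. destruct HP as [_ [_ [_ [_ [_ [_ [_ [H _]]]]]]]]; apply H. Qed.
Lemma compDl {A B D} (f g : Hom B D) (h : Hom A B) :
  addm f g ∘ h = addm (f ∘ h) (g ∘ h).
Proof. destruct HP as [_ [_ [_ [_ [_ [_ [_ [_ H]]]]]]]]; apply H. Qed.

Lemma add0m {A B} (f : Hom A B) : addm zerom f = f.
Proof. rewrite addmC; apply addm0. Qed.
Lemma addNm {A B} (f : Hom A B) : addm (oppm f) f = zerom.
Proof. rewrite addmC; apply addmN. Qed.
Lemma submK {A B} (a b : Hom A B) : addm (addm a (oppm b)) b = a.
Proof. rewrite <- addmA, addNm, addm0; reflexivity. Qed.
Lemma addmK {A B} (a b : Hom A B) : addm (addm a b) (oppm b) = a.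
Proof. rewrite <- addmA, addmN, addm0; reflexivity. Qed.
Lemma addIm {A B} (a b c : Hom A B) : addm a c = addm b c -> a = b.
Proof. intro H. rewrite <- (addmK a c), H, addmK. reflexivity. Qed.
Lemma addm_eq0 {A B} (a b : Hom A B) : addm a b = zerom -> b = oppm a.
Proof. intro H. apply addIm with a. rewrite (addmC b), H, addNm. reflexivity. Qed.
Lemma subm_eq0 {A B} (a b : Hom A B) : addm a (oppm b) = zerom -> a = b.
Proof. intro H. rewrite <- (submK a b), H, add0m. reflexivity. Qed.

Lemma compm0 {A B D} (h : Hom B D) : h ∘ (@zerom C A B) = zerom.
Proof. apply addIm with (h ∘ zerom). rewrite <- compDr, addm0, add0m. reflexivity. Qed.
Lemma comp0m {A B D} (h : Hom A B) : (@zerom C B D) ∘ h = zerom.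
Proof. apply addIm with (zerom ∘ h). rewrite <- compDl, addm0, add0m. reflexivity. Qed.
Lemma compmN {A B D} (h : Hom B D) (f : Hom A B) : h ∘ oppm f = oppm (h ∘ f).
Proof. apply addm_eq0. rewrite <- compDr, addmN, compm0. reflexivity. Qed.
Lemma compNm {A B D} (h : Hom A B) (f : Hom B D) : oppm f ∘ h = oppm (f ∘ h).
Proof. apply addm_eq0. rewrite <- compDl, addmN, comp0m. reflexivity. Qed.
Lemma oppmK {A B} (a : Hom A B) : oppm (oppm a) = a.
Proof. symmetry. apply addm_eq0, addNm. Qed.
Lemma oppm0 {A B} : oppm (@zerom C A B) = zerom.
Proof. symmetry. apply addm_eq0, addm0. Qed.
Lemma oppmD {A B} (a b : Hom A B) : oppm (addm a b) = addm (oppm a) (oppm b).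
Proof.
  symmetry. apply addm_eq0.
  rewrite (addmC (oppm a)), addmA, <- (addmA a), addmN, addm0, addmN. reflexivity.
Qed.

Lemma kernel_mono {A B K} (f : Hom A B) (k : Hom K A) : is_kernel f k -> is_mono k.
Proof.
  intros [Hk0 Hk] Z x y Hxy.
  destruct (Hk Z (k ∘ x)) as [y0 [_ Hu]].
  - rewrite compA, Hk0, comp0m. reflexivity.
  - rewrite (Hu x eq_refl), (Hu y (eq_sym Hxy)). reflexivity.
Qed.

Lemma kernel_map {A B A' B' K K'} (p : Hom A B) (k : Hom K A) (p' : Hom A' B')
  (k' : Hom K' A') (h : Hom B B') (u : Hom A A') :
  is_kernel p k -> is_kernel p' k' -> p' ∘ u = h ∘ p -> exists m, k' ∘ m = u ∘ k.
Proof.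
  intros [Hk0 _] [_ Hk'] Hu.
  destruct (Hk' K (u ∘ k)) as [m [Hm _]].
  - rewrite compA, Hu, <- compA, Hk0, compm0. reflexivity.
  - exists m. exact Hm.
Qed.

Lemma pullback_uniq {X Y TT P Z} (f : Hom X Y) (p : Hom TT Y)
  (g : Hom P X) (r : Hom P TT) (c1 c2 : Hom Z P) :
  is_pullback f p g r -> g ∘ c1 = g ∘ c2 -> r ∘ c1 = r ∘ c2 -> c1 = c2.
Proof.
  intros [Hc Hu] E1 E2.
  destruct (Hu Z (g ∘ c1) (r ∘ c1)) as [c [_ Hcu]].
  - rewrite !compA, Hc. reflexivity.
  - rewrite (Hcu c1 eq_refl eq_refl), (Hcu c2 (eq_sym E1) (eq_sym E2)). reflexivity.
Qed.

Lemma pullback_kernel_map {X Y TT P K} (f : Hom X Y) (p : Hom TT Y)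
  (g : Hom P X) (r : Hom P TT) (k : Hom K TT) :
  is_pullback f p g r -> is_kernel p k -> exists j : Hom K P, g ∘ j = zerom /\ r ∘ j = k.
Proof.
  intros [_ Hu] [Hk0 _].
  destruct (Hu K zerom k) as [c [Hc _]].
  - rewrite compm0, Hk0. reflexivity.
  - exists c. exact Hc.
Qed.

Lemma pullback_kernel_factor {X Y TT P K Z} (f : Hom X Y) (p : Hom TT Y)
  (g : Hom P X) (r : Hom P TT) (k : Hom K TT) (j : Hom K P) (x : Hom Z P) :
  is_pullback f p g r -> is_kernel p k -> g ∘ j = zerom -> r ∘ j = k ->
  g ∘ x = zerom -> exists y, j ∘ y = x.
Proof.
  intros Hpb [_ Hk] Hgj Hrj Hx.
  destruct (Hk Z (r ∘ x)) as [y [Hy _]].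
  - rewrite compA, <- (proj1 Hpb), <- compA, Hx, compm0. reflexivity.
  - exists y. apply (pullback_uniq f p g r); trivial.
    + rewrite compA, Hgj, Hx, comp0m. reflexivity.
    + rewrite compA, Hrj, Hy. reflexivity.
Qed.

End Preadditive.

Section StableCategory.
Context {C : PreCat} (HC : is_abelian C) {T : Obj C -> Prop} (HT : is_add_subcat T).
Implicit Types A B D K P X Y Z : Obj C.

Let HP := ab_preadd HC.

Lemma factors_T0 {A B} : factors_T T (@zerom C A B).
Proof.
  destruct (sub_zero HT) as [O [_ HO]].
  exists O, zerom, zerom. split; trivial. symmetry; apply (comp0m HP).
Qed.

Lemma factors_T_src {A B} (h : Hom A B) : T A -> factors_T T h.
Proof. intro HA. exists A, (idm A), h. split; trivial. symmetry; apply (compm1 HP). Qed.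

Lemma factors_T_tgt {A B} (h : Hom A B) : T B -> factors_T T h.
Proof. intro HB. exists B, h, (idm B). split; trivial. symmetry; apply (comp1m HP). Qed.

Lemma factors_T_compl {A B D} (x : Hom B D) (h : Hom A B) :
  factors_T T h -> factors_T T (x ∘ h).
Proof. intros [E [a [b [HE ->]]]]. exists E, a, (x ∘ b). split; trivial. apply (compA HP). Qed.

Lemma factors_T_compr {A B D} (h : Hom B D) (y : Hom A B) :
  factors_T T h -> factors_T T (h ∘ y).
Proof.
  intros [E [a [b [HE ->]]]]. exists E, (a ∘ y), b. split; trivial. symmetry; apply (compA HP).
Qed.

Lemma factors_T_opp {A B} (h : Hom A B) : factors_T T h -> factors_T T (oppm h).
Proof.
  intros [E [a [b [HE ->]]]]. exists E, a, (oppm b). split; trivial. symmetry; apply (compNm HP).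
Qed.

Lemma factors_T_add {A B} (h1 h2 : Hom A B) :
  factors_T T h1 -> factors_T T h2 -> factors_T T (addm h1 h2).
Proof.
  intros [E1 [a1 [b1 [HE1 ->]]]] [E2 [a2 [b2 [HE2 ->]]]].
  destruct (ab_biprod HC E1 E2) as [Q [i1 [i2 [p1 [p2 Hb]]]]].
  pose proof Hb as [H1 [H2 [H3 [H4 _]]]].
  exists Q, (addm (i1 ∘ a1) (i2 ∘ a2)), (addm (b1 ∘ p1) (b2 ∘ p2)). split.
  - eapply (sub_sum HT); eauto.
  - assert (Hreassoc : forall E E' (v : Hom E B) (q : Hom Q E) (i : Hom E' Q) (a : Hom A E'),
      (v ∘ q) ∘ (i ∘ a) = v ∘ ((q ∘ i) ∘ a)).
    { intros. rewrite !(compA HP). reflexivity. }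
    rewrite (compDr HP), !(compDl HP), !Hreassoc, H1, H2, H3, H4,
      !(comp0m HP), !(compm0 HP), !(comp1m HP), (addm0 HP), (add0m HP).
    reflexivity.
Qed.

Lemma steq_refl {A B} (h : Hom A B) : steq T h h.
Proof. unfold steq. rewrite (addmN HP). apply factors_T0. Qed.

Lemma steq_sym {A B} (h h' : Hom A B) : steq T h h' -> steq T h' h.
Proof.
  unfold steq. intro H. apply factors_T_opp in H.
  rewrite (oppmD HP), (oppmK HP), (addmC HP) in H. exact H.
Qed.

Lemma steq_trans {A B} (h1 h2 h3 : Hom A B) : steq T h1 h2 -> steq T h2 h3 -> steq T h1 h3.
Proof.
  unfold steq. intros H12 H23. pose proof (factors_T_add _ _ H12 H23) as H.
  rewrite <- (addmA HP), (addmA HP (oppm h2)), (addNm HP), (add0m HP) in H. exact H.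
Qed.

Lemma steq_compl {A B D} (x : Hom B D) (h h' : Hom A B) :
  steq T h h' -> steq T (x ∘ h) (x ∘ h').
Proof.
  unfold steq. intro H. apply (factors_T_compl x) in H.
  rewrite (compDr HP), (compmN HP) in H. exact H.
Qed.

Lemma steq_compr {A B D} (y : Hom A B) (h h' : Hom B D) :
  steq T h h' -> steq T (h ∘ y) (h' ∘ y).
Proof.
  unfold steq. intro H. apply (factors_T_compr _ y) in H.
  rewrite (compDl HP), (compNm HP) in H. exact H.
Qed.

Lemma steq0 {A B} (h : Hom A B) : steq T h zerom <-> factors_T T h.
Proof. unfold steq. rewrite (oppm0 HP), (addm0 HP). tauto. Qed.

Lemma factors_T_steq {A B} (h h' : Hom A B) :
  steq T h h' -> factors_T T h' -> factors_T T h.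
Proof.
  intros Hhh' Hh'. apply steq0. apply steq0 in Hh'. exact (steq_trans _ _ _ Hhh' Hh').
Qed.

Lemma steq_comp_inv_l {A B} (a : Hom A B) (a' : Hom B A) {Z} (x : Hom Z A) :
  steq T (a' ∘ a) (idm A) -> steq T x (a' ∘ (a ∘ x)).
Proof.
  intro Ha. rewrite (compA HP). apply steq_sym.
  rewrite <- (comp1m HP x) at 2. apply steq_compr, Ha.
Qed.

Lemma retract_T {P D} (i : Hom P D) (s : Hom D P) : T D -> s ∘ i = idm P -> T P.
Proof.
  intros HD Hsi.
  destruct (ab_ker HC _ _ s) as [K [k Hk]].
  pose proof (kernel_mono HP _ _ Hk) as Hkm.
  pose proof Hk as [Hk0 Hku].
  destruct (Hku D (addm (idm D) (oppm (i ∘ s)))) as [m [Hm _]].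
  { rewrite (compDr HP), (compmN HP), (compA HP), Hsi, (comp1m HP), (compm1 HP), (addmN HP).
    reflexivity. }
  assert (Hb : @is_biproduct C P K D i k s m).
  { repeat split.
    - exact Hsi.
    - apply Hkm. rewrite (compA HP), Hm, (compDl HP), (compNm HP), <- (compA HP i), Hk0,
        (compm0 HP), (oppm0 HP), (addm0 HP), (comp1m HP), (compm1 HP). reflexivity.
    - exact Hk0.
    - apply Hkm. rewrite (compA HP), Hm, (compDl HP), (compNm HP), <- (compA HP i), Hsi,
        (compm0 HP), (comp1m HP), (compm1 HP), (addmN HP). reflexivity.
    - rewrite Hm, (addmA HP), (addmC HP (i ∘ s)), <- (addmA HP), (addmN HP), (addm0 HP).
      reflexivity. }
  exact (sub_summand HT Hb HD).
Qed.

Lemma factors_T_idm {P} : factors_T T (idm P) -> T P.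
Proof. intros [D [a [b [HD Hba]]]]. apply (retract_T a b HD). auto. Qed.

Lemma stiso_from_zero_obj {O P} (be : Hom O P) : is_zero_obj C O -> stiso T be -> T P.
Proof.
  intros [_ HO] [b [_ Hbeb]]. apply factors_T_idm.
  apply (factors_T_steq _ (be ∘ b)); [apply steq_sym, Hbeb|].
  rewrite (HO P b zerom), (compm0 HP). apply factors_T0.
Qed.


Lemma pullback_exists {X Y TT} (f : Hom X Y) (p : Hom TT Y) :
  exists P (g : Hom P X) (r : Hom P TT), is_pullback f p g r.
Proof.
  destruct (ab_biprod HC X TT) as [Q [i1 [i2 [p1 [p2 [H1 [H2 [H3 [H4 H5]]]]]]]]].
  destruct (ab_ker HC _ _ (addm (f ∘ p1) (oppm (p ∘ p2)))) as [P [ka [Hk0 Hku]]].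
  exists P, (p1 ∘ ka), (p2 ∘ ka). split.
  - apply (subm_eq0 HP). rewrite (compDl HP), (compNm HP) in Hk0. rewrite !(compA HP). exact Hk0.
  - intros Z a b Hab.
    destruct (Hku Z (addm (i1 ∘ a) (i2 ∘ b))) as [c [Hc Hcu]].
    { rewrite (compDr HP), !(compDl HP), !(compNm HP), <- !(compA HP), !(compA HP p1),
        !(compA HP p2), H1, H2, H3, H4, !(comp1m HP), !(comp0m HP), !(compm0 HP), (oppm0 HP),
        (addm0 HP), (add0m HP), Hab, (addmN HP).
      reflexivity. }
    exists c. split.
    + rewrite <- !(compA HP), Hc, !(compDr HP), !(compA HP), H1, H2, H3, H4, !(comp0m HP),
        !(comp1m HP), (addm0 HP), (add0m HP).
      split; reflexivity.
    + intros c' E1 E2. apply Hcu.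
      rewrite <- (compA HP) in E1. rewrite <- (compA HP) in E2.
      rewrite <- (comp1m HP (ka ∘ c')), <- H5, (compDl HP), <- !(compA HP), E1, E2.
      reflexivity.
Qed.

Lemma pullback_precover_iff {X Y TT P} (f : Hom X Y) (p : Hom TT Y)
  (g : Hom P X) (r : Hom P TT) :
  is_precover T p -> is_pullback f p g r -> (is_precover T g <-> T P).
Proof.
  intros [_ Hp] [_ Hpb]. split.
  - intros [HTP _]; exact HTP.
  - intro HTP. split; trivial. intros Z t HZ.
    destruct (Hp Z (f ∘ t) HZ) as [t' Ht'].
    destruct (Hpb Z t t' (eq_sym Ht')) as [c [[Hc _] _]]. exists c; exact Hc.
Qed.

Lemma stiso_idm {A} : stiso T (idm A).
Proof. exists (idm A). rewrite (comp1m HP). split; apply steq_refl. Qed.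

Lemma strong_mono_of_pullback_in_T {X Y TY P} (f : Hom X Y) (p : Hom TY Y)
  (g : Hom P X) (r : Hom P TY) :
  is_precover T p -> is_pullback f p g r -> T P -> strong_mono T f.
Proof.
  intros Hp Hpb HTP.
  destruct (ab_ker HC _ _ p) as [K [k Hk]].
  destruct (pullback_kernel_map HP f p g r k Hpb Hk) as [j [Hgj Hrj]].
  destruct (sub_zero HT) as [O [HO HTO]].
  exists K, O. split; trivial.
  exists TY, p, k. split; [exact Hp | split; [exact Hk|]].
  exists K, P, X, Y, j, g, f, TY, p, k, r.
  do 5 (split; trivial).
  exists (idm K), zerom, (idm X), (idm Y).
  split; [apply stiso_idm|]. split.
  { exists zerom. split; apply factors_T_src; trivial. }
  split; [apply stiso_idm|]. split; [apply stiso_idm|]. split.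
  { exists (idm TY). rewrite !(comp1m HP), !(compm1 HP). split; reflexivity. }
  split; [apply factors_T_tgt; trivial|].
  split; [apply factors_T_src; trivial|].
  rewrite (comp1m HP), (compm1 HP). apply steq_refl.
Qed.

(* [factors_T T h] says that [h] vanishes in the stable category, so this is the
   monomorphism property of [f] there. *)
Definition stable_mono {X Y} (f : Hom X Y) : Prop :=
  forall Z (x : Hom Z X), factors_T T (f ∘ x) -> factors_T T x.

Lemma stable_mono_of_pullback_in_T {X Y TY P} (f : Hom X Y) (p : Hom TY Y)
  (g : Hom P X) (r : Hom P TY) :
  is_precover T p -> is_pullback f p g r -> T P -> stable_mono f.
Proof.
  intros [_ Hp] [_ Hpb] HTP Z x [D [a [b [HD Hfx]]]].
  destruct (Hp D b HD) as [v Hv].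
  destruct (Hpb Z x (v ∘ a)) as [c [[Hc _] _]].
  { rewrite Hfx, (compA HP), Hv. reflexivity. }
  exists P, c, g. split; [exact HTP | symmetry; exact Hc].
Qed.

Lemma stable_mono_transfer {X Y X' Y'} (f : Hom X Y) (f' : Hom X' Y')
  (al : Hom X X') (al' : Hom X' X) (ga : Hom Y Y') :
  steq T (al' ∘ al) (idm X) -> steq T (ga ∘ f) (f' ∘ al) -> stable_mono f' -> stable_mono f.
Proof.
  intros Hal Hsq Hf' Z x Hfx.
  apply (factors_T_steq _ _ (steq_comp_inv_l al al' x Hal)).
  apply factors_T_compl, Hf'.
  apply (factors_T_steq _ (ga ∘ f ∘ x)).
  - rewrite (compA HP). apply steq_sym, steq_compr, Hsq.
  - rewrite <- (compA HP). apply factors_T_compl, Hfx.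
Qed.

Lemma pullback_proj_factors_T {X Y TY P} (f : Hom X Y) (p : Hom TY Y)
  (g : Hom P X) (r : Hom P TY) :
  stable_mono f -> is_precover T p -> is_pullback f p g r -> factors_T T g.
Proof.
  intros Hf [HTY _] [Hc _]. apply Hf. rewrite Hc. exists TY, r, p. split; trivial.
Qed.

(* With [g = b a] through [T] and [d] a lift of [b] to [P], [id - d a] is killed by [g],
   hence factors through [j]. *)
Lemma pullback_in_T_of_factors {X Y TY P K} (f : Hom X Y) (p : Hom TY Y)
  (g : Hom P X) (r : Hom P TY) (k : Hom K TY) (j : Hom K P) :
  is_precover T p -> is_kernel p k -> is_pullback f p g r -> g ∘ j = zerom -> r ∘ j = k ->
  factors_T T g -> factors_T T j -> T P.
Proof.
  intros [_ Hp] Hk Hpb Hgj Hrj [D [a [b [HD Hg]]]] Hj.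
  destruct (Hp D (f ∘ b) HD) as [t Ht].
  destruct (proj2 Hpb D b t (eq_sym Ht)) as [d [[Hd _] _]].
  destruct (pullback_kernel_factor HP f p g r k j (addm (idm P) (oppm (d ∘ a))) Hpb Hk Hgj Hrj)
    as [e He].
  { rewrite (compDr HP), (compmN HP), (compA HP), Hd, <- Hg, (compm1 HP), (addmN HP).
    reflexivity. }
  apply factors_T_idm.
  rewrite <- (submK HP (idm P) (d ∘ a)), <- He.
  apply factors_T_add.
  - apply factors_T_compr, Hj.
  - exists D, a, d. split; trivial.
Qed.

(* Omega is well defined on stable classes: a lift of a map stably equal to the identity
   induces on [Omega Y] a map stably equal to the identity. *)
Lemma omega_steq_idm {Y TY K} (p : Hom TY Y) (k : Hom K TY)
  (h : Hom Y Y) (u : Hom TY TY) (m : Hom K K) :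
  is_precover T p -> is_kernel p k -> p ∘ u = h ∘ p -> k ∘ m = u ∘ k ->
  steq T h (idm Y) -> steq T (idm K) m.
Proof.
  intros [HTY Hp] Hk Hu Hm [D [a [b [HD Hh]]]].
  pose proof Hk as [Hk0 Hku].
  destruct (Hp D b HD) as [v Hv].
  destruct (Hku TY (addm (addm (idm TY) (oppm u)) (v ∘ (a ∘ p)))) as [s [Hs _]].
  { rewrite !(compDr HP), (compmN HP), (compm1 HP), Hu, !(compA HP), Hv, <- Hh,
      (compDl HP), (compNm HP), (comp1m HP), <- (addmA HP), (addmA HP (oppm (h ∘ p))),
      (addNm HP), (add0m HP), (addmN HP).
    reflexivity. }
  assert (Hid : addm (idm K) (oppm m) = s ∘ k).
  { apply (kernel_mono HP _ _ Hk).
    rewrite (compA HP), Hs, (compDr HP), (compmN HP), (compm1 HP), Hm, !(compDl HP),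
      (compNm HP), (comp1m HP), <- !(compA HP), Hk0, !(compm0 HP), (addm0 HP).
    reflexivity. }
  exists TY, k, s. split; [exact HTY | exact Hid].
Qed.

Lemma steq_square_inv {X Y X' Y'} (f : Hom X Y) (f' : Hom X' Y')
  (al : Hom X X') (al' : Hom X' X) (ga : Hom Y Y') (ga' : Hom Y' Y) :
  steq T (ga ∘ f) (f' ∘ al) -> steq T (ga' ∘ ga) (idm Y) -> steq T (al ∘ al') (idm X') ->
  steq T (f ∘ al') (ga' ∘ f').
Proof.
  intros Hsq Hga Hal.
  apply (steq_trans _ (ga' ∘ (ga ∘ (f ∘ al')))); [apply steq_comp_inv_l, Hga|].
  rewrite (compA HP ga). apply (steq_trans _ (ga' ∘ (f' ∘ al ∘ al'))).
  - apply steq_compl, steq_compr, Hsq.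
  - rewrite <- (compA HP f'). rewrite <- (compm1 HP f') at 2. apply steq_compl, steq_compl, Hal.
Qed.

(* A morphism of standard triangles: a stably commutative square [f x ~ y f'] together with a
   lift [u] of [y] along the precovers extends to the middle terms, compatibly with [Omega]. *)
Lemma standard_triangle_map {X Y TY P K X' Y' TY' P' K'}
  (f : Hom X Y) (p : Hom TY Y) (g : Hom P X) (r : Hom P TY) (k : Hom K TY) (j : Hom K P)
  (f' : Hom X' Y') (p' : Hom TY' Y') (g' : Hom P' X') (r' : Hom P' TY') (k' : Hom K' TY')
  (j' : Hom K' P') (x : Hom X' X) (y : Hom Y' Y) (u : Hom TY' TY) (e : Hom K' K) :
  is_precover T p -> is_pullback f p g r -> g ∘ j = zerom -> r ∘ j = k ->
  f' ∘ g' = p' ∘ r' -> g' ∘ j' = zerom -> r' ∘ j' = k' ->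
  steq T (f ∘ x) (y ∘ f') -> p ∘ u = y ∘ p' -> k ∘ e = u ∘ k' ->
  exists n : Hom P' P, n ∘ j' = j ∘ e.
Proof.
  intros [_ Hp] Hpb Hgj Hrj Hc' Hgj' Hrj' [D [a [b [HD Hsq]]]] Hu He.
  destruct (Hp D b HD) as [v Hv].
  destruct (proj2 Hpb P' (x ∘ g') (addm (u ∘ r') (v ∘ (a ∘ g')))) as [n [[Hn1 Hn2] _]].
  { rewrite (compA HP), <- (submK HP (f ∘ x) (y ∘ f')), Hsq, (compDl HP), (compDr HP),
      !(compA HP), Hu, Hv, <- !(compA HP), Hc', (addmC HP).
    reflexivity. }
  exists n. apply (pullback_uniq HP f p g r); trivial.
  - rewrite !(compA HP), Hn1, Hgj, <- (compA HP), Hgj', (compm0 HP), (comp0m HP). reflexivity.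
  - rewrite !(compA HP), Hn2, Hrj, He, (compDl HP), <- !(compA HP), Hgj', Hrj', !(compm0 HP),
      (addm0 HP).
    reflexivity.
Qed.

Lemma pullback_in_T_transfer {X Y X' Y' TY' P' K'} (f : Hom X Y) (f' : Hom X' Y')
  (p' : Hom TY' Y') (g' : Hom P' X') (r' : Hom P' TY') (k' : Hom K' TY') (j' : Hom K' P')
  (al : Hom X X') (ga : Hom Y Y') :
  is_precover T p' -> is_kernel p' k' -> is_pullback f' p' g' r' ->
  g' ∘ j' = zerom -> r' ∘ j' = k' -> T P' ->
  stiso T al -> stiso T ga -> steq T (ga ∘ f) (f' ∘ al) ->
  forall TY (p : Hom TY Y) P (g : Hom P X) (r : Hom P TY),
    is_precover T p -> is_pullback f p g r -> T P.
Proof.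
  intros Hp' Hk' Hpb' Hgj' Hrj' HTP' [al' [Hal1 Hal2]] [ga' [Hga1 Hga2]] Hsq TY p P g r Hp Hpb.
  destruct (ab_ker HC _ _ p) as [K [k Hk]].
  destruct (pullback_kernel_map HP f p g r k Hpb Hk) as [j [Hgj Hrj]].
  apply (pullback_in_T_of_factors f p g r k j Hp Hk Hpb Hgj Hrj).
  - apply (pullback_proj_factors_T f p g r); trivial.
    apply (stable_mono_transfer f f' al al' ga Hal1 Hsq).
    exact (stable_mono_of_pullback_in_T f' p' g' r' Hp' Hpb' HTP').
  - destruct (proj2 Hp' TY (ga ∘ p) (proj1 Hp)) as [u Hu].
    destruct (proj2 Hp TY' (ga' ∘ p') (proj1 Hp')) as [u' Hu'].
    destruct (kernel_map HP p k p' k' ga u Hk Hk' Hu) as [m Hm].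
    destruct (kernel_map HP p' k' p k ga' u' Hk' Hk Hu') as [e He].
    destruct (standard_triangle_map f p g r k j f' p' g' r' k' j' al' ga' u' e
      Hp Hpb Hgj Hrj (proj1 Hpb') Hgj' Hrj' (steq_square_inv f f' al al' ga ga' Hsq Hga1 Hal2)
      Hu' He) as [n Hn].
    assert (Hem : steq T (idm K) (e ∘ m)).
    { apply (omega_steq_idm p k (ga' ∘ ga) (u' ∘ u)); trivial.
      - rewrite (compA HP), Hu', <- (compA HP), Hu, (compA HP). reflexivity.
      - rewrite (compA HP), He, <- (compA HP), Hm, (compA HP). reflexivity. }
    apply (factors_T_steq _ (j ∘ (e ∘ m))).
    + rewrite <- (compm1 HP j) at 1. apply steq_compl, Hem.
    + rewrite (compA HP), <- Hn, <- (compA HP). apply factors_T_compl, factors_T_tgt, HTP'.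
Qed.

Lemma strong_mono_pullback_in_T {X Y} (f : Hom X Y) :
  strong_mono T f -> forall TY (p : Hom TY Y) P (g : Hom P X) (r : Hom P TY),
    is_precover T p -> is_pullback f p g r -> T P.
Proof.
  intros [W [O [HO [TD [q [kq [_ [_ Htri]]]]]]]].
  destruct Htri as [K' [P' [X' [Y' [j' [g' [f' [TY' [p' [k' [r' Htri]]]]]]]]]]].
  destruct Htri as [Hp' [Hk' [Hpb' [Hgj' [Hrj' Htri]]]]].
  destruct Htri as [om [be [al [ga [_ [Hbe [Hal [Hga [_ [_ [_ Hsq]]]]]]]]]]].
  apply (pullback_in_T_transfer f f' p' g' r' k' j' al ga Hp' Hk' Hpb' Hgj' Hrj'); trivial.
  exact (stiso_from_zero_obj be HO Hbe).
Qed.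

Lemma strong_mono_iff_pullback_in_T {X Y} (f : Hom X Y) :
  contravariantly_finite T ->
  (strong_mono T f <-> forall TY (p : Hom TY Y) P (g : Hom P X) (r : Hom P TY),
     is_precover T p -> is_pullback f p g r -> T P) /\
  (strong_mono T f <-> exists TY (p : Hom TY Y) P (g : Hom P X) (r : Hom P TY),
     is_precover T p /\ is_pullback f p g r /\ T P).
Proof.
  intro Hcf.
  destruct (Hcf Y) as [TY0 [p0 Hp0]].
  destruct (pullback_exists f p0) as [P0 [g0 [r0 Hpb0]]].
  split; split.
  - apply strong_mono_pullback_in_T.
  - intro Hall. exact (strong_mono_of_pullback_in_T f p0 g0 r0 Hp0 Hpb0 (Hall _ _ _ _ _ Hp0 Hpb0)).
  - intro Hs. exists TY0, p0, P0, g0, r0.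
    split; [exact Hp0 | split; [exact Hpb0 | exact (strong_mono_pullback_in_T f Hs _ _ _ _ _ Hp0 Hpb0)]].
  - intros [TY [p [P [g [r [Hp [Hpb HTP]]]]]]].
    exact (strong_mono_of_pullback_in_T f p g r Hp Hpb HTP).
Qed.

End StableCategory.

Theorem proposition2p2 (C : PreCat) (HC : is_abelian C)
  (T : Obj C -> Prop) (HT : is_add_subcat T) (Hcf : contravariantly_finite T)
  (X Y : Obj C) (f : Hom X Y) :
  (* (1) <-> (2), "for every" version *)
  (strong_mono T f <->
     forall TY (p : Hom TY Y) P (g : Hom P X) (q : Hom P TY),
       is_precover T p -> is_pullback f p g q -> is_precover T g) /\
  (* (1) <-> (2), "for some" version *)
  (strong_mono T f <->
     exists TY (p : Hom TY Y) P (g : Hom P X) (q : Hom P TY),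
       is_precover T p /\ is_pullback f p g q /\ is_precover T g) /\
  (* (1) <-> (3), "for every" version *)
  (strong_mono T f <->
     forall TY (p : Hom TY Y) P (g : Hom P X) (q : Hom P TY),
       is_precover T p -> is_pullback f p g q -> T P) /\
  (* (1) <-> (3), "for some" version *)
  (strong_mono T f <->
     exists TY (p : Hom TY Y) P (g : Hom P X) (q : Hom P TY),
       is_precover T p /\ is_pullback f p g q /\ T P).
Proof.
  destruct (strong_mono_iff_pullback_in_T HC HT f Hcf) as [Hevery Hsome].
  split; [|split; [|split; [exact Hevery | exact Hsome]]].
  - rewrite Hevery. split; intros H TY p P g q Hp Hpb.
    + apply (pullback_precover_iff f p g q Hp Hpb), (H _ _ _ _ _ Hp Hpb).
    + apply (pullback_precover_iff f p g q Hp Hpb), (H _ _ _ _ _ Hp Hpb).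
  - rewrite Hsome. split; intros [TY [p [P [g [q [Hp [Hpb HPg]]]]]]];
      exists TY, p, P, g, q; refine (conj Hp (conj Hpb _)).
    + apply (pullback_precover_iff f p g q Hp Hpb), HPg.
    + apply (pullback_precover_iff f p g q Hp Hpb), HPg.
Qed.
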